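(* There exists a one-input one-output AND-OR net that does not belong to $\mathbf S(\mathbf{11tAND}\cup\mathbf{11pOR})$.
   Context: Petri nets: $(P,T,F)$ with finite disjoint places $P$, transitions $T$, flow edges $F\subseteq(P\times T)\cup(T\times P)$; $\bullet x=\{y\mid(y,x)\in F\}$, $x\bullet=\{y\mid(x,y)\in F\}$. Workflow nets. A pWF net is $(P,T,F,I,O)$ with $(P,T,F)$ a Petri net, $I,O\subseteq P$ non-empty, every node reachable by a directed path from some node of $I$, and some node of $O$ reachable from every node. A tWF net is the same with $I,O$ non-empty subsets of $T$. Input nodes may have incoming edges and output nodes outgoing edges. A WF net is a pWF or tWF net; it is one-input (one-output) if $|I|=1$ ($|O|=1$). Substitution. Let $N=(P,T,F,I,O)$ and $M=(P',T',F',I',O')$ be WF nets with disjoint node sets. If $p\in P$ and $M$ is a pWF net, $N\otimes_p M$ is obtained from $N$ by deleting $p$ and all edges incident to $p$, adding all nodes and edges of $M$, adding an edge $(t,p')$ for each $t\in\bullet_N p$ and each $p'\in I'$, and an edge $(p',t)$ for each $p'\in O'$ and each $t\in p\bullet_N$; its input set is $(I\setminus\{p\})\cup I'$ if $p\in I$ and $I$ otherwise, and its output set is $(O\setminus\{p\})\cup O'$ if $p\in O$ and $O$ otherwise. If $t\in T$ and $M$ is a tWF net, $N\otimes_t M$ is defined analogously: delete $t$ and its edges, add $M$, add $(q,t')$ for each $q\in\bullet_N t$, $t'\in I'$, and $(t',q)$ for each $t'\in O'$, $q\in t\bullet_N$, with input/output sets updated in the same way. The substitution closure $\mathbf S(C)$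 of a class $C$ of WF nets is the smallest superclass of $C$ such that whenever $N,M\in\mathbf S(C)$ are disjoint, $N\otimes_p M\in\mathbf S(C)$ for every place $p$ of $N$ if $M$ is a pWF net, and $N\otimes_t M\in\mathbf S(C)$ for every transition $t$ of $N$ if $M$ is a tWF net. AND and OR nets. An AND net is an acyclic WF net $(P,T,F,I,O)$ such that for every place $p$: (1) either $p\in I$ and $|\bullet p|=0$, or $p\notin I$ and $|\bullet p|=1$; and (2) either $p\in O$ and $|p\bullet|=0$, or $p\notin O$ and $|p\bullet|=1$. An OR net is a (possibly cyclic) WF net such that for every transition $t$: (1) either $t\in I$ and $|\bullet t|=0$, or $t\notin I$ and $|\bullet t|=1$; and (2) either $t\in O$ and $|t\bullet|=0$, or $t\notin O$ and $|t\bullet|=1$. A pAND (tAND, pOR, tOR) net is an AND (AND, OR, OR) net that is a pWF (tWF, pWF, tWF) net. $\mathbf{pAND}$ is the class of pAND nets, $\mathbf{11tAND}$ the class of one-input one-output tAND nets, $\mathbf{11pOR}$ the class of one-input one-output pOR nets, and $\mathbf{tOR}$ the class of tOR nets. The class of AND-OR nets is $\mathbf S(\mathbf{pAND}\cup\mathbf{11tAND}\cup\mathbf{11pOR}\cup\mathbf{tOR})$. *)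

From mathcomp Require Import all_boot.
From Stdlib Require Import Relations.Relation_Operators.
Set Implicit Arguments. Unset Strict Implicit. Unset Printing Implicit Defensive.

Record Net := mkNet {
  pl  : pred nat;
  tr  : pred nat;
  fl  : rel nat;
  inp : pred nat;
  out : pred nat }.

Definition node (N : Net) (x : nat) : bool := pl N x || tr N x.

Definition petri_net (N : Net) : Prop :=
  (exists n, forall x, node N x -> x < n) /\
  (forall x, ~~ (pl N x && tr N x)) /\
  (forall x y, fl N x y -> (pl N x && tr N y) || (tr N x && pl N y)).

Definition reach (N : Net) : nat -> nat -> Prop :=
  clos_refl_trans nat (fun x y => fl N x y).

Definition wf_common (N : Net) : Prop :=
  petri_net N /\
  (exists i, inp N i) /\ (exists o, out N o) /\
  (forall x, node N x -> exists i, inp N i /\ reach N i x) /\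
  (forall x, node N x -> exists o, out N o /\ reach N x o).

Definition pWF (N : Net) : Prop :=
  wf_common N /\ (forall x, inp N x -> pl N x) /\ (forall x, out N x -> pl N x).

Definition tWF (N : Net) : Prop :=
  wf_common N /\ (forall x, inp N x -> tr N x) /\ (forall x, out N x -> tr N x).

Definition WF (N : Net) : Prop := pWF N \/ tWF N.

Definition one_input (N : Net) : Prop := exists! i, inp N i.
Definition one_output (N : Net) : Prop := exists! o, out N o.

(* Substitution N ⊗_x M of the node x of N by M (uniform for places and
   transitions; the type constraints are imposed in the closure). *)
Definition subst (N : Net) (x : nat) (M : Net) : Net :=
  mkNet
    (fun y => (pl N y && (y != x)) || pl M y)
    (fun y => (tr N y && (y != x)) || tr M y)
    (fun u v => [&& fl N u v, u != x & v != x] || fl M u v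
                || (fl N u x && inp M v) || (out M u && fl N x v))
    (if inp N x then (fun y => (inp N y && (y != x)) || inp M y) else inp N)
    (if out N x then (fun y => (out N y && (y != x)) || out M y) else out N).

Definition disjoint_nets (N M : Net) : Prop :=
  forall y, node N y -> ~~ node M y.

Inductive S (C : Net -> Prop) : Net -> Prop :=
| S_base N : C N -> S C N
| S_place N M p : S C N -> S C M -> disjoint_nets N M -> pl N p -> pWF M ->
    S C (subst N p M)
| S_trans N M t : S C N -> S C M -> disjoint_nets N M -> tr N t -> tWF M ->
    S C (subst N t M).

Definition acyclic (N : Net) : Prop :=
  forall x, ~ clos_trans nat (fun u v => fl N u v) x x.

Definition no_pre (N : Net) x : Prop := forall y, ~ fl N y x.
Definition one_pre (N : Net) x : Prop := exists! y, fl N y x.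
Definition no_post (N : Net) x : Prop := forall y, ~ fl N x y.
Definition one_post (N : Net) x : Prop := exists! y, fl N x y.

Definition AND_net (N : Net) : Prop :=
  WF N /\ acyclic N /\
  forall p, pl N p ->
    ((inp N p /\ no_pre N p) \/ (~ inp N p /\ one_pre N p)) /\
    ((out N p /\ no_post N p) \/ (~ out N p /\ one_post N p)).

Definition OR_net (N : Net) : Prop :=
  WF N /\
  forall t, tr N t ->
    ((inp N t /\ no_pre N t) \/ (~ inp N t /\ one_pre N t)) /\
    ((out N t /\ no_post N t) \/ (~ out N t /\ one_post N t)).

Definition pAND (N : Net) : Prop := AND_net N /\ pWF N.
Definition tAND11 (N : Net) : Prop :=
  AND_net N /\ tWF N /\ one_input N /\ one_output N.
Definition pOR11 (N : Net) : Prop :=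
  OR_net N /\ pWF N /\ one_input N /\ one_output N.
Definition tOR (N : Net) : Prop := OR_net N /\ tWF N.

Definition AND_OR_net (N : Net) : Prop :=
  S (fun M => pAND M \/ tAND11 M \/ pOR11 M \/ tOR M) N.

From mathcomp Require Import all_boot.
From Stdlib Require Import Relations.Relation_Operators.
Set Implicit Arguments. Unset Strict Implicit. Unset Printing Implicit Defensive.

(* The proof isolates an invariant of S(11tAND ∪ 11pOR) that fails for a
   suitable AND-OR net.  Call a net biclique-free if no two distinct nodes
   u1, u2 share two distinct successors a, b (no K_{2,2} in the flow graph).
   - In an AND net every place, in an OR net every transition, has at most one
     predecessor and one successor; since every edge of a Petri net touches a
     place and a transition, both kinds of nets are biclique-free.
   - Substituting a one-input one-output net M for a node x of N preserves
     being a Petri net, having one input and one output, and biclique-freeness: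
     collapsing M back to x maps a biclique of the result either into a
     biclique of N or of M, or onto a triangle u -> x -> b, u -> b, which a
     bipartite flow graph cannot contain.
   Hence every net of S(11tAND ∪ 11pOR) is biclique-free.  The witness is the
   one-input one-output pOR net 0 -> {1, 2} -> 3 with its output place 3
   replaced by the pAND net {4, 5} -> 6 -> 7: both transitions 1 and 2 then
   feed both places 4 and 5. *)

Definition biclique (N : Net) (u1 u2 a b : nat) : Prop :=
  [/\ u1 <> u2, a <> b & [&& fl N u1 a, fl N u1 b, fl N u2 a & fl N u2 b]].

Definition biclique_free (N : Net) : Prop :=
  forall u1 u2 a b, ~ biclique N u1 u2 a b.

Lemma biclique_swap_src N u1 u2 a b :
  biclique N u1 u2 a b -> biclique N u2 u1 a b.
Proof. by case=> ne nab /and4P[*]; split; auto; apply/and4P. Qed.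

Lemma biclique_swap_tgt N u1 u2 a b :
  biclique N u1 u2 a b -> biclique N u1 u2 b a.
Proof. by case=> ne nab /and4P[*]; split; auto; apply/and4P. Qed.

Lemma edge_nodes N u v : petri_net N -> fl N u v -> node N u /\ node N v.
Proof.
by case=> _ [_ He] /He /orP[] /andP[hu hv]; rewrite /node hu hv ?orbT.
Qed.

Lemma no_self_loop N u : petri_net N -> ~ fl N u u.
Proof.
by case=> _ [Hd He] /He; move: (Hd u); case: (pl N u); case: (tr N u).
Qed.

Lemma no_triangle N u x a :
  petri_net N -> fl N u x -> fl N x a -> fl N u a -> False.
Proof.
case=> _ [Hd He] /He h1 /He h2 /He h3.
move: h1 h2 h3 (Hd u) (Hd x) (Hd a).
by case: (pl N u) (tr N u) (pl N x) (tr N x) (pl N a) (tr N a) => [] [] [] [] [] [].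
Qed.

Lemma WF_petri_net N : WF N -> petri_net N.
Proof. by case=> [[[]]|[[]]]. Qed.

Definition degree_le1 (N : Net) (K : pred nat) : Prop :=
  forall y, K y ->
    ((inp N y /\ no_pre N y) \/ (~ inp N y /\ one_pre N y)) /\
    ((out N y /\ no_post N y) \/ (~ out N y /\ one_post N y)).

Lemma degree_le1_biclique_free N K :
  (forall u v, fl N u v -> K u || K v) -> degree_le1 N K -> biclique_free N.
Proof.
move=> touch deg u1 u2 a b [ne nab /and4P[h1a h1b h2a h2b]].
case/orP: (touch _ _ h1a) => [/deg [_ post] | /deg [pre _]].
- case: post => [[_ /(_ a)] // | [_ [c [_ uc]]]].
  by apply: nab; rewrite -(uc _ h1a) (uc _ h1b).
- case: pre => [[_ /(_ u1)] // | [_ [c [_ uc]]]].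
  by apply: ne; rewrite -(uc _ h1a) (uc _ h2a).
Qed.

Lemma edge_touches_place N u v : petri_net N -> fl N u v -> pl N u || pl N v.
Proof. by case=> _ [_ He] /He /orP[] /andP[hu hv]; rewrite ?hu ?hv ?orbT. Qed.

Lemma edge_touches_transition N u v :
  petri_net N -> fl N u v -> tr N u || tr N v.
Proof. by case=> _ [_ He] /He /orP[] /andP[hu hv]; rewrite ?hu ?hv ?orbT. Qed.

Lemma AND_biclique_free N : AND_net N -> biclique_free N.
Proof.
case=> /WF_petri_net petri [_ deg].
apply: (@degree_le1_biclique_free N (pl N)) deg => u v; exact: edge_touches_place.
Qed.

Lemma OR_biclique_free N : OR_net N -> biclique_free N.
Proof.
case=> /WF_petri_net petri deg.
apply: (@degree_le1_biclique_free N (tr N)) deg => u v; exact: edge_touches_transition.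
Qed.

(* The ports of M have the same kind (place or transition) as the node x of
   N they replace; this is what the closure S demands. *)
Definition same_kind (N : Net) (x : nat) (M : Net) (y : nat) : Prop :=
  pl M y = pl N x /\ tr M y = tr N x.

Lemma pWF_same_kind N M p y : petri_net N -> pl N p -> pWF M ->
  inp M y || out M y -> same_kind N p M y.
Proof.
move=> [_ [HdN _]] pp [[[_ [HdM _]] _] [HI HO]] /orP[/HI|/HO] py;
  by move: (HdN p) (HdM y); rewrite /same_kind pp py /= => /negbTE -> /negbTE ->.
Qed.

Lemma tWF_same_kind N M t y : petri_net N -> tr N t -> tWF M ->
  inp M y || out M y -> same_kind N t M y.
Proof.
move=> [_ [HdN _]] tt [[[_ [HdM _]] _] [HI HO]] /orP[/HI|/HO] ty;
  by move: (HdN t) (HdM y); rewrite /same_kind tt ty !andbT => /negbTE -> /negbTE ->.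
Qed.

Section SubstPetriNet.
Variables (N M : Net) (x : nat).
Hypotheses (petriN : petri_net N) (petriM : petri_net M).
Hypothesis disj : disjoint_nets N M.
Hypothesis ports : forall y, inp M y || out M y -> same_kind N x M y.

Local Notation NM := (subst N x M).

Lemma pre_neq u : fl N u x -> u != x.
Proof. by apply: contraTneq => ->; apply/negP/no_self_loop. Qed.

Lemma post_neq v : fl N x v -> v != x.
Proof. by apply: contraTneq => ->; apply/negP/no_self_loop. Qed.

Lemma subst_finite : exists n, forall y, node NM y -> y < n.
Proof.
case: petriN => [[n Hn] _]; case: petriM => [[m Hm] _].
exists (maxn n m) => y; rewrite /node /= orbACA.
case/orP=> [/orP[] /andP[h _] | h].
- by apply: leq_trans (Hn y _) (leq_maxl _ _); rewrite /node h.
- by apply: leq_trans (Hn y _) (leq_maxl _ _); rewrite /node h orbT.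
- exact: leq_trans (Hm y h) (leq_maxr _ _).
Qed.

Lemma subst_kinds_disjoint y : ~~ (pl NM y && tr NM y).
Proof.
case: petriN => _ [HdN _]; case: petriM => _ [HdM _].
apply/negP => /= /andP[/orP[/andP[p _]|p] /orP[/andP[t _]|t]].
- by move: (HdN y); rewrite p t.
- by move: (disj (y := y)); rewrite /node p t orbT => /(_ isT).
- by move: (disj (y := y)); rewrite /node p t orbT => /(_ isT).
- by move: (HdM y); rewrite p t.
Qed.

Lemma subst_edges_bipartite u v :
  fl NM u v -> (pl NM u && tr NM v) || (tr NM u && pl NM v).
Proof.
case: petriN => _ [_ HeN]; case: petriM => _ [_ HeM].
rewrite /=; case/orP=> [/orP[/orP[/and3P[h -> ->]|h]|/andP[h iv]]|/andP[ov h]].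
- by case/orP: (HeN _ _ h) => /andP[-> ->]; rewrite ?orbT.
- by case/orP: (HeM _ _ h) => /andP[-> ->]; rewrite ?orbT.
- have [pv tv] := ports (y := v) (introT orP (or_introl iv)).
  by rewrite pv tv (pre_neq h); case/orP: (HeN _ _ h) => /andP[-> ->]; rewrite ?orbT.
- have [pu tu] := ports (y := u) (introT orP (or_intror ov)).
  by rewrite pu tu (post_neq h); case/orP: (HeN _ _ h) => /andP[-> ->]; rewrite ?orbT.
Qed.

Lemma subst_petri_net : petri_net NM.
Proof.
split; [exact: subst_finite | split; [exact: subst_kinds_disjoint|]].
exact: subst_edges_bipartite.
Qed.

End SubstPetriNet.

Lemma subst_one_input N x M :
  one_input N -> (inp N x -> one_input M) -> one_input (subst N x M).
Proof.
move=> [iN [iNi uN]] hM; rewrite /one_input /=.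
case E: (inp N x); last by exists iN.
case: (hM E) => i [ii ui]; exists i; split; first by rewrite ii orbT.
move=> y /orP[/andP[hy /eqP ne]|]; last exact: ui.
by case: ne; rewrite -(uN _ hy) (uN _ E).
Qed.

Lemma subst_one_output N x M :
  one_output N -> (out N x -> one_output M) -> one_output (subst N x M).
Proof.
move=> [oN [oNo uN]] hM; rewrite /one_output /=.
case E: (out N x); last by exists oN.
case: (hM E) => o [oo uo]; exists o; split; first by rewrite oo orbT.
move=> y /orP[/andP[hy /eqP ne]|]; last exact: uo.
by case: ne; rewrite -(uN _ hy) (uN _ E).
Qed.

Section SubstBicliqueFree.
Variables (N M : Net) (x i o : nat).
Hypotheses (petriN : petri_net N) (petriM : petri_net M).
Hypotheses (disj : disjoint_nets N M) (nodex : node N x).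
Hypotheses (inpM : forall y, inp M y -> y = i) (outM : forall y, out M y -> y = o).
Hypotheses (nodei : node M i) (nodeo : node M o).

Local Notation NM := (subst N x M).

Definition collapse (y : nat) : nat := if node M y then x else y.

Lemma N_not_M y : node N y -> node M y = false.
Proof. by move/disj/negbTE. Qed.

Lemma edge_N_not_M u v : fl N u v -> node M u = false /\ node M v = false.
Proof. by case/(edge_nodes petriN) => /N_not_M -> /N_not_M ->. Qed.

Lemma subst_edge_avoids u v : fl NM u v -> (u != x) && (v != x).
Proof.
have Mx := N_not_M nodex.
have notx y : node M y -> y != x by apply: contraTneq => ->; rewrite Mx.
rewrite /=; case/orP=> [/orP[/orP[/and3P[_ -> ->] //|h]|/andP[h iv]]|/andP[ov h]].
- by case: (edge_nodes petriM h) => /notx -> /notx ->.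
- by rewrite (pre_neq petriN h) notx // (inpM iv).
- by rewrite (post_neq petriN h) notx // (outM ov).
Qed.

Lemma subst_edge_inner u v : node M u -> node M v -> fl NM u v -> fl M u v.
Proof.
move=> mu mv; rewrite /=.
case/orP=> [/orP[/orP[/and3P[h _ _]|//]|/andP[h _]]|/andP[_ h]];
  have := edge_N_not_M h; by rewrite ?mu ?mv => -[].
Qed.

Lemma subst_edge_exit u v : node M u -> ~~ node M v -> fl NM u v -> u = o.
Proof.
move=> mu /negbTE mv; rewrite /=.
case/orP=> [/orP[/orP[/and3P[h _ _]|h]|/andP[h _]]|/andP[/outM //]].
- by have := edge_N_not_M h; rewrite mu => -[].
- by have := edge_nodes petriM h; rewrite /= mv => -[].
- by have := edge_N_not_M h; rewrite mu => -[].
Qed.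

Lemma subst_edge_entry u v : ~~ node M u -> node M v -> fl NM u v -> v = i.
Proof.
move=> /negbTE mu mv; rewrite /=.
case/orP=> [/orP[/orP[/and3P[h _ _]|h]|/andP[_ /inpM //]]|/andP[/outM eo _]].
- by have := edge_N_not_M h; rewrite mv => -[].
- by have := edge_nodes petriM h; rewrite /= mu => -[].
- by move: nodeo; rewrite -eo mu.
Qed.

Lemma subst_edge_collapse u v :
  ~~ (node M u && node M v) -> fl NM u v -> fl N (collapse u) (collapse v).
Proof.
rewrite /collapse => inner /=.
case/orP=> [/orP[/orP[/and3P[h _ _]|h]|/andP[h /inpM ->]]|/andP[/outM -> h]].
- by case: (edge_N_not_M h) => -> ->.
- by case: (edge_nodes petriM h) inner => -> ->.
- by rewrite nodei; case: (edge_N_not_M h) => ->.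
- by rewrite nodeo; case: (edge_N_not_M h) => _ ->.
Qed.

Lemma collapse_eq y z :
  y != x -> z != x -> y <> z -> collapse y = collapse z -> node M y && node M z.
Proof.
rewrite /collapse => /negbTE yx /negbTE zx ne.
by case: (node M y) (node M z) => [] [] // E; [move: zx | move: yx]; rewrite E eqxx.
Qed.

Section Biclique.
Hypothesis freeM : biclique_free M.

(* Two sources inside M, one of them not the output: the biclique lies in M. *)
Lemma biclique_inside_M u1 u2 a b : biclique NM u1 u2 a b ->
  node M u1 -> node M u2 -> u1 != o -> False.
Proof.
move=> [ne nab /and4P[h1a h1b h2a h2b]] m1 m2 /eqP o1.
have inM c : fl NM u1 c -> node M c.
  by move=> h; apply/negPn/negP => nc; exact: o1 (subst_edge_exit m1 nc h).
apply: (freeM (u1 := u1) (u2 := u2) (a := a) (b := b)); split=> //.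
by apply/and4P; split; apply: subst_edge_inner => //; apply: inM.
Qed.

Lemma sources_in_M u1 u2 a b :
  biclique NM u1 u2 a b -> node M u1 -> node M u2 -> False.
Proof.
move=> B m1 m2; have [o1|] := eqVneq u1 o; last exact: biclique_inside_M B m1 m2.
apply: (biclique_inside_M (biclique_swap_src B)) => //.
by case: B => ne _ _; apply/eqP => o2; apply: ne; rewrite o1 o2.
Qed.

Lemma targets_in_M u1 u2 a b :
  biclique NM u1 u2 a b -> node M a -> node M b -> False.
Proof.
have key c d : biclique NM u1 u2 c d -> node M c -> c != i -> False.
  move=> B mc /eqP ci; case: (B) => _ _ /and4P[h1c _ h2c _].
  have inM u : fl NM u c -> node M u.
    by move=> h; apply/negPn/negP => nu; exact: ci (subst_edge_entry nu mc h).
  exact: sources_in_M B (inM _ h1c) (inM _ h2c).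
move=> B ma mb; have [ai|] := eqVneq a i; last exact: key _ _ B ma.
apply: (key _ _ (biclique_swap_tgt B)) => //.
by case: B => _ nab _; apply/eqP => bi; apply: nab; rewrite ai bi.
Qed.

(* An edge inside M whose other endpoints lie outside M yields the triangle
   u2 -> x -> b, u2 -> b in N. *)
Lemma inner_edge_impossible u1 u2 a b :
  biclique NM u1 u2 a b -> node M u1 -> node M a -> False.
Proof.
move=> B m1 ma.
have [m2|n2] := boolP (node M u2); first exact: sources_in_M B m1 m2.
have [mb|nb] := boolP (node M b); first exact: targets_in_M B ma mb.
case: B => _ _ /and4P[_ h1b h2a h2b].
have e1 : fl N x b.
  by have := subst_edge_collapse _ h1b; rewrite /collapse m1 (negbTE nb); apply.
have e2 : fl N u2 x.
  by have := subst_edge_collapse _ h2a; rewrite /collapse ma (negbTE n2); apply.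
have e3 : fl N u2 b.
  by have := subst_edge_collapse _ h2b; rewrite /collapse (negbTE n2) (negbTE nb); apply.
exact: no_triangle petriN e2 e1 e3.
Qed.

Lemma collapse_biclique u1 u2 a b : biclique NM u1 u2 a b ->
  ~~ (node M u1 && node M a) -> ~~ (node M u1 && node M b) ->
  ~~ (node M u2 && node M a) -> ~~ (node M u2 && node M b) ->
  biclique N (collapse u1) (collapse u2) (collapse a) (collapse b).
Proof.
move=> [ne nab /and4P[h1a h1b h2a h2b]] n1a n1b n2a n2b.
case/andP: (subst_edge_avoids h1a) => x1 xa.
case/andP: (subst_edge_avoids h2b) => x2 xb.
split; last by apply/and4P; split; apply: subst_edge_collapse.
- move/(collapse_eq x1 x2 ne) => /andP[m1 m2].
  have na : ~~ node M a by rewrite m1 in n1a.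
  by apply: ne; rewrite (subst_edge_exit m1 na h1a) (subst_edge_exit m2 na h2a).
- move/(collapse_eq xa xb nab) => /andP[ma mb].
  have n1 : ~~ node M u1 by rewrite ma andbT in n1a.
  by apply: nab; rewrite (subst_edge_entry n1 ma h1a) (subst_edge_entry n1 mb h1b).
Qed.

End Biclique.

Lemma subst_biclique_free : biclique_free N -> biclique_free M -> biclique_free NM.
Proof.
move=> freeN freeM u1 u2 a b B.
have [/andP[m1 ma]|n1a] := boolP (node M u1 && node M a).
  exact: (inner_edge_impossible freeM B m1 ma).
have [/andP[m1 mb]|n1b] := boolP (node M u1 && node M b).
  exact: (inner_edge_impossible freeM (biclique_swap_tgt B) m1 mb).
have [/andP[m2 ma]|n2a] := boolP (node M u2 && node M a).
  exact: (inner_edge_impossible freeM (biclique_swap_src B) m2 ma).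
have [/andP[m2 mb]|n2b] := boolP (node M u2 && node M b).
  exact: (inner_edge_impossible freeM (biclique_swap_tgt (biclique_swap_src B)) m2 mb).
exact: freeN (collapse_biclique B n1a n1b n2a n2b).
Qed.

End SubstBicliqueFree.

Definition one_io_biclique_free (N : Net) : Prop :=
  [/\ petri_net N, one_input N, one_output N & biclique_free N].

Lemma subst_one_io_biclique_free N M x :
  one_io_biclique_free N -> one_io_biclique_free M -> disjoint_nets N M ->
  node N x -> (forall y, inp M y || out M y -> same_kind N x M y) ->
  one_io_biclique_free (subst N x M).
Proof.
move=> [petriN inN outN freeN] [petriM inM outM freeM] disj nodex ports.
have port_node y : inp M y || out M y -> node M y.
  by move/ports => [py ty]; rewrite /node py ty.
case: (inM) (outM) => i [ii ui] [o [oo uo]].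
split; first exact: subst_petri_net.
- exact: subst_one_input.
- exact: subst_one_output.
apply: (subst_biclique_free (i := i) (o := o)) => //.
- by move=> y /ui.
- by move=> y /uo.
- by apply: port_node; rewrite ii.
- by apply: port_node; rewrite oo orbT.
Qed.

Lemma S_one_io_biclique_free N :
  S (fun M => tAND11 M \/ pOR11 M) N -> one_io_biclique_free N.
Proof.
elim=> {N} [N [[AND [_ [inN outN]]] | [OR [_ [inN outN]]]]
           | N M p _ IN _ IM disj pp pM | N M t _ IN _ IM disj tt tM].
- by split=> //; [case: AND => /WF_petri_net | apply: AND_biclique_free].
- by split=> //; [case: OR => /WF_petri_net | apply: OR_biclique_free].
- apply: subst_one_io_biclique_free => //; first by rewrite /node pp.
  by case: IN => petriN _ _ _ y; apply: pWF_same_kind.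
- apply: subst_one_io_biclique_free => //; first by rewrite /node tt orbT.
  by case: IN => petriN _ _ _ y; apply: tWF_same_kind.
Qed.

Definition choice_net : Net :=
  mkNet (fun y => (y == 0) || (y == 3)) (fun y => (y == 1) || (y == 2))
    (fun u v => [|| (u == 0) && (v == 1), (u == 0) && (v == 2),
                    (u == 1) && (v == 3) | (u == 2) && (v == 3)])
    (fun y => y == 0) (fun y => y == 3).

Definition join_net : Net :=
  mkNet (fun y => [|| y == 4, y == 5 | y == 7]) (fun y => y == 6)
    (fun u v => [|| (u == 4) && (v == 6), (u == 5) && (v == 6) | (u == 6) && (v == 7)])
    (fun y => (y == 4) || (y == 5)) (fun y => y == 7).

Ltac case_nodes := repeat match goal with
 | H : is_true (_ || _) |- _ => case/orP: H => H
 | H : is_true (_ && _) |- _ => let H1 := fresh "H" in case/andP: H => H H1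
 | H : is_true (_ == _) |- _ => move/eqP: H => H; first [discriminate H | subst]
 | H : is_true false |- _ => discriminate H
 | H : is_true ?t |- _ => progress (simpl in H)
 end.

Lemma edge_reach (N : Net) u v : fl N u v -> reach N u v.
Proof. exact: rt_step. Qed.

Lemma edge2_reach (N : Net) u v w : fl N u v -> fl N v w -> reach N u w.
Proof. by move=> h1 h2; apply: rt_trans (rt_step _ _ _ _ h1) (rt_step _ _ _ _ h2). Qed.

Lemma ranked_acyclic (N : Net) : (forall u v, fl N u v -> u < v) -> acyclic N.
Proof.
move=> rank y cyc.
suff: forall a b, clos_trans nat (fun u v => fl N u v) a b -> a < b.
  by move/(_ _ _ cyc); rewrite ltnn.
by move=> a b; elim=> [u v /rank //|u v w _ h1 _ h2]; exact: ltn_trans h1 h2.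
Qed.

Lemma choice_net_pWF : pWF choice_net.
Proof.
split; last by split=> y /= h; case_nodes.
split; [|split; [by exists 0|split; [by exists 3|split]]].
- split; [exists 4 => y; rewrite /node /= => h; case_nodes; done|].
  by split=> [y|u v /= h]; [apply/negP => /= h|]; case_nodes.
- move=> y; rewrite /node /= => h; exists 0; split=> //; case_nodes.
  + exact: rt_refl.
  + exact: (@edge2_reach _ _ 1).
  + exact: edge_reach.
  + exact: edge_reach.
- move=> y; rewrite /node /= => h; exists 3; split=> //; case_nodes.
  + exact: (@edge2_reach _ _ 1).
  + exact: rt_refl.
  + exact: edge_reach.
  + exact: edge_reach.
Qed.

Lemma choice_net_pOR11 : pOR11 choice_net.
Proof.
split; [split; [by left; apply: choice_net_pWF|] | split; [exact: choice_net_pWF|]].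
- move=> t /= h; split; right; (split; [by case_nodes|]).
  + by exists 0; split=> [|y hy]; case_nodes.
  + by exists 3; split=> [|y hy]; case_nodes.
- by split; [exists 0 | exists 3]; split=> // y h; case_nodes.
Qed.

Lemma join_net_pWF : pWF join_net.
Proof.
split; last by split=> y /= h; case_nodes.
split; [|split; [by exists 4|split; [by exists 7|split]]].
- split; [exists 8 => y; rewrite /node /= => h; case_nodes; done|].
  by split=> [y|u v /= h]; [apply/negP => /= h|]; case_nodes.
- move=> y; rewrite /node /= => h; case_nodes.
  + by exists 4; split=> //; exact: rt_refl.
  + by exists 5; split=> //; exact: rt_refl.
  + by exists 4; split=> //; exact: (@edge2_reach _ _ 6).
  + by exists 4; split=> //; exact: edge_reach.
- move=> y; rewrite /node /= => h; exists 7; split=> //; case_nodes.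
  + exact: (@edge2_reach _ _ 6).
  + exact: (@edge2_reach _ _ 6).
  + exact: rt_refl.
  + exact: edge_reach.
Qed.

Lemma join_net_pAND : pAND join_net.
Proof.
split; last exact: join_net_pWF.
split; [by left; apply: join_net_pWF | split].
- by apply: ranked_acyclic => u v /= h; case_nodes.
- move=> p /= h; case_nodes.
  + split; [left; split=> // y /= h; case_nodes | right; split; first by move=> h; case_nodes].
    by exists 6; split=> // y h; case_nodes.
  + split; [left; split=> // y /= h; case_nodes | right; split; first by move=> h; case_nodes].
    by exists 6; split=> // y h; case_nodes.
  + split; [right; split; first by move=> h; case_nodes | left; split=> // y /= h; case_nodes].
    by exists 6; split=> // y h; case_nodes.
Qed.

Theorem mainTheorem4 :
  exists N : Net,
    AND_OR_net N /\ one_input N /\ one_output N /\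
    ~ S (fun M => tAND11 M \/ pOR11 M) N.
Proof.
exists (subst choice_net 3 join_net); split; [|split; [|split]].
- apply: S_place => //; last exact: join_net_pWF.
  + by apply: S_base; right; right; left; exact: choice_net_pOR11.
  + by apply: S_base; left; exact: join_net_pAND.
  + by move=> y; rewrite /node /= => h; case_nodes.
- (* 3 is not the input of choice_net: the input stays 0. *)
  by apply: subst_one_input => //; case: choice_net_pOR11 => _ [_ []].
- (* 3 is the output of choice_net: the output becomes 7. *)
  apply: subst_one_output; first by case: choice_net_pOR11 => _ [_ []].
  by move=> _; exists 7; split=> // y /= h; case_nodes.
- (* Transitions 1 and 2 both feed the places 4 and 5. *)
  case/S_one_io_biclique_free => _ _ _ free.
  by apply: (free 1 2 4 5).
Qed.
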